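(* Let $q\equiv1\pmod3$ and let $v\in\mathbb{F}_q^*$ be a non-cube in $\mathbb{F}_q$. Then $\#\mathcal{J}_{\mathrm{GH},v}=(q+2)/3$.
   Context: For $u,v\in\mathbb{F}_q$ with $v\ne0$ and $u^3\ne27v$, the generalized Hessian curve $E_{\mathrm{GH},u,v}$ is the elliptic curve $X^3+Y^3+v=uXY$ over $\mathbb{F}_q$, with $j(E_{\mathrm{GH},u,v})=\frac1v\left(\frac{u(u^3+216v)}{u^3-27v}\right)^3$. For $v\in\mathbb{F}_q^*$, $\mathcal{J}_{\mathrm{GH},v}=\{j(E_{\mathrm{GH},u,v}): u\in\mathbb{F}_q,\ u^3\ne27v\}$. *)

From HB Require Import structures.
From mathcomp Require Import all_boot all_order all_algebra all_field.
Set Implicit Arguments. Unset Strict Implicit. Unset Printing Implicit Defensive.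
Import GRing.Theory.
Local Open Scope ring_scope.

(* j-invariant of the generalized Hessian curve X^3 + Y^3 + v = u X Y:
   j = (1/v) * ( u (u^3 + 216 v) / (u^3 - 27 v) )^3 *)
Definition jGH (F : fieldType) (u v : F) : F :=
  v^-1 * (u * (u ^+ 3 + 216%:R * v) / (u ^+ 3 - 27%:R * v)) ^+ 3.

Definition JGH (F : finFieldType) (v : F) : {set F} :=
  [set jGH u v | u in [pred u : F | u ^+ 3 != 27%:R * v]].

From HB Require Import structures.
From mathcomp Require Import all_boot all_order all_algebra all_field.
From mathcomp Require Import ring.
Import GRing.Theory.
Set Implicit Arguments. Unset Strict Implicit. Unset Printing Implicit Defensive.
Local Open Scope ring_scope.

(* The j-invariant j(u) = jGH u v depends on u only through
   t = u^3:  j(u) = jOfCube v t, where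
     jOfCube v t = t (t + 216v)^3 / (v (t - 27v)^3).
   Let v be a non-cube and 3 != 0 in F.
   - Then u^3 != 27 v for every u, so J_{GH,v} is the image of the set of
     cubes under jOfCube v.
   - jOfCube v is injective on cubes: clearing denominators, j(u) = j(w)
     factors as (u^3 - w^3) * N(A, B, D) = 0, where N is the norm form
     a^3 + v b^3 + v^2 d^3 - 3vabd of the pure cubic extension F(v^(1/3))
     and A, B, D are explicit polynomials in u, w.  Since v is not a cube, N
     is anisotropic, and A = D = 0 again forces u^3 = w^3.
   - If #|F| = 1 mod 3, F contains a primitive cube root of unity z (so also
     3 != 0), hence cubing is 3-to-1 on F^*, and 3 * #|cubes| = #|F| + 2.
   Together, #|J_{GH,v}| = #|cubes| = (#|F| + 2) / 3. *)

(* The norm form of the pure cubic extension F(v^(1/3)) / F, evaluated at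
   a + b v^(1/3) + d v^(2/3). *)
Definition cubic_norm (R : comPzRingType) (v a b d : R) : R :=
  a ^+ 3 + v * b ^+ 3 + v ^+ 2 * d ^+ 3 - 3%:R * v * a * b * d.

Section CubicNorm.

Variables (F : fieldType) (v : F).
Hypothesis v_noncube : forall w : F, w ^+ 3 != v.

(* The "adjugate" coordinates of a + b v^(1/3) + d v^(2/3) vanish only at 0:
   otherwise b / d would be a cube root of v. *)
Lemma adjugate_eq0 (a b d : F) :
  a ^+ 2 - v * b * d = 0 -> v * d ^+ 2 - a * b = 0 -> b ^+ 2 - a * d = 0 ->
  [/\ a = 0, b = 0 & d = 0].
Proof.
move=> /eqP; rewrite subr_eq0 => /eqP e0 /eqP; rewrite subr_eq0 => /eqP e1.
move=> /eqP; rewrite subr_eq0 => /eqP e2.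
have [d0|dn0] := eqVneq d 0.
  move/eqP: e2; rewrite d0 mulr0 sqrf_eq0 => /eqP b0.
  by move/eqP: e0; rewrite b0 d0 !mulr0 sqrf_eq0 => /eqP a0.
have vd3 : v * d ^+ 3 = b ^+ 3.
  have -> : v * d ^+ 3 = (v * d ^+ 2) * d by ring.
  rewrite e1 (_ : a * b * d = b * (a * d)); last by ring.
  by rewrite -e2; ring.
by move: (v_noncube (b / d)); rewrite expr_div_n -vd3 mulfK ?expf_neq0 ?eqxx.
Qed.

(* The adjugate
   coordinates are quadratic combinations whose relations with N are ring
   identities, so N = 0 makes them vanish, and then so do a, b, d. *)
Lemma cubic_norm_anisotropic (a b d : F) :
  cubic_norm v a b d = 0 -> [/\ a = 0, b = 0 & d = 0].
Proof.
rewrite /cubic_norm => hN.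
set a' := a ^+ 2 - v * b * d; set b' := v * d ^+ 2 - a * b.
set d' := b ^+ 2 - a * d.
have e0 : a' ^+ 2 - v * b' * d' = 0.
  by rewrite -[RHS](mulr0 a) -hN /a' /b' /d'; ring.
have e1 : v * d' ^+ 2 - a' * b' = 0.
  by rewrite -[RHS](mulr0 b) -hN /a' /b' /d'; ring.
have e2 : b' ^+ 2 - a' * d' = 0.
  by rewrite -[RHS](mulr0 d) -hN /a' /b' /d'; ring.
have [a'0 b'0 d'0] := adjugate_eq0 e0 e1 e2.
exact: adjugate_eq0 a'0 b'0 d'0.
Qed.

End CubicNorm.

Definition jOfCube (F : fieldType) (v t : F) : F :=
  v^-1 * (t * (t + 216%:R * v) ^+ 3 / (t - 27%:R * v) ^+ 3).

Lemma jGH_cubeE (F : fieldType) (u v : F) : jGH u v = jOfCube v (u ^+ 3).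
Proof. by rewrite /jGH /jOfCube expr_div_n exprMn. Qed.

Lemma jGH_cross_factor (R : comPzRingType) (v u w : R) :
  u ^+ 3 * (u ^+ 3 + 216%:R * v) ^+ 3 * (w ^+ 3 - 27%:R * v) ^+ 3
  - w ^+ 3 * (w ^+ 3 + 216%:R * v) ^+ 3 * (u ^+ 3 - 27%:R * v) ^+ 3
  = (u ^+ 3 - w ^+ 3) *
    cubic_norm v
      (w ^+ 3 * (u ^+ 3 - 27%:R * v) - 27%:R * v * (u ^+ 3 + 216%:R * v))
      (- 9%:R * u ^+ 2 * (w ^+ 3 + 54%:R * v))
      (27%:R * u * (w ^+ 3 - 108%:R * v)).
Proof. rewrite /cubic_norm; ring. Qed.

Section JInvariantInjective.

Variables (F : fieldType) (v : F).
Hypotheses (v_neq0 : v != 0) (v_noncube : forall w : F, w ^+ 3 != v).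
Hypothesis three_neq0 : 3%:R != 0 :> F.

Let twentyseven_neq0 : 27%:R != 0 :> F.
Proof. by rewrite -[27%N]/(3 ^ 3)%N natrX expf_neq0. Qed.

(* 27 v = 3^3 v is not a cube, so the curve E_{GH,u,v} is defined for all u. *)
Lemma cube_neq_27v (u : F) : u ^+ 3 - 27%:R * v != 0.
Proof.
rewrite subr_eq0; apply: contra (v_noncube (u / 3%:R)) => /eqP e.
by rewrite expr_div_n e -natrX mulrC mulKf.
Qed.

(* The degenerate branch of the factorisation: if the first and last norm
   coordinates vanish, then again u^3 = w^3.  If u = 0, then w^3 = -216 v,
   which is a cube times v unless 2 = 0 (and then w^3 = 0); otherwise
   w^3 = 108 v and the first coordinate becomes 81 v (u^3 - 108 v). *)
Lemma cube_eq_of_coords (u w : F) :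
  w ^+ 3 * (u ^+ 3 - 27%:R * v) - 27%:R * v * (u ^+ 3 + 216%:R * v) = 0 ->
  27%:R * u * (w ^+ 3 - 108%:R * v) = 0 -> u ^+ 3 = w ^+ 3.
Proof.
move=> hA /eqP; rewrite !mulf_eq0 (negbTE twentyseven_neq0) /=.
case/orP=> [/eqP u0 | ]; last first.
  rewrite subr_eq0 => /eqP w3; rewrite w3.
  have : 27%:R * (3%:R * v * (u ^+ 3 - 108%:R * v)) = 0.
    by rewrite -hA w3; ring.
  by move/eqP; rewrite !mulf_eq0 (negbTE twentyseven_neq0) (negbTE three_neq0)
       (negbTE v_neq0) subr_eq0 /= => /eqP.
have : 27%:R * v * (w ^+ 3 + 216%:R * v) = 0 by rewrite -[RHS]oppr0 -hA u0; ring.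
move/eqP; rewrite !mulf_eq0 (negbTE twentyseven_neq0) (negbTE v_neq0).
rewrite addr_eq0 /= u0 expr0n /= => /eqP w3.
have [two0|two_neq0] := eqVneq (2%:R : F) 0.
  by rewrite w3 (_ : 216 = 2 * 108)%N // natrM two0 !mul0r oppr0.
have six_neq0 : 6%:R != 0 :> F by rewrite (_ : 6 = 2 * 3)%N // natrM mulf_neq0.
have := v_noncube (- w / 6%:R); rewrite expr_div_n exprNn w3 -natrX.
rewrite (_ : (-1) ^+ 3 * - (216%:R * v) = 216%:R * v :> F); last by ring.
by rewrite -[216%N]/(6 ^ 3)%N mulrC mulKf ?natrX ?expf_neq0 ?eqxx.
Qed.

Lemma jGH_inj_cube (u w : F) : jGH u v = jGH w v -> u ^+ 3 = w ^+ 3.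
Proof.
rewrite !jGH_cubeE /jOfCube => /(mulfI (invr_neq0 v_neq0)) /eqP.
rewrite eqr_div ?expf_neq0 ?cube_neq_27v // -subr_eq0 jGH_cross_factor.
rewrite mulf_eq0 subr_eq0 => /orP [/eqP // | /eqP hN].
have [hA _ hD] := cubic_norm_anisotropic v_noncube hN.
exact: cube_eq_of_coords hA hD.
Qed.

End JInvariantInjective.

(* A nontrivial cube root of unity z satisfies z^2 + z + 1 = 0, and its
   existence rules out characteristic 3, where (z - 1)^3 = z^3 - 1. *)
Lemma prim_cube_root_props (F : fieldType) (z : F) : z ^+ 3 = 1 -> z != 1 ->
  z ^+ 2 + z + 1 = 0 /\ 3%:R != 0 :> F.
Proof.
move=> z3 z_neq1; split.
  have : (z - 1) * (z ^+ 2 + z + 1) = 0 by rewrite -(subrr (1 : F)) -{3}z3; ring.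
  by move/eqP; rewrite mulf_eq0 subr_eq0 (negbTE z_neq1) => /eqP.
apply: contra z_neq1 => /eqP three0.
have : (z - 1) ^+ 3 = (z ^+ 3 - 1) - 3%:R * (z ^+ 2 - z) by ring.
by rewrite z3 subrr three0 mul0r subr0 => /eqP; rewrite expf_eq0 subr_eq0.
Qed.

(* If 3 divides #|F| - 1, then F has a nontrivial cube root of unity: not all
   of the 3m units can be m-th roots of unity, and x^m is a cube root of 1. *)
Lemma prim_cube_root_exists (F : finFieldType) :
  (#|F| %% 3 = 1)%N -> exists2 z : F, z ^+ 3 = 1 & z != 1.
Proof.
move=> q_mod3; set m := (#|F| %/ 3)%N.
have q_eq : #|F| = (m * 3).+1 by rewrite {1}(divn_eq #|F| 3) q_mod3 addn1.
have m_gt0 : (0 < m)%N.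
  by have := finNzRing_gt1 F; rewrite q_eq ltnS muln_gt0 andbT.
have [x /andP [x_neq0 xm_neq1] | all_roots] :=
  pickP [pred x : F | (x != 0) && (x ^+ m != 1)].
  exists (x ^+ m) => //; apply: (mulIf x_neq0).
  by rewrite mul1r -exprM -exprSr -q_eq expf_card.
have units_roots : all m.-unity_root (enum (predC1 (0 : F))).
  apply/allP => x; rewrite mem_enum inE => x_neq0; apply/unity_rootP.
  by move: (all_roots x) => /=; rewrite x_neq0 => /negbFE/eqP.
have := max_unity_roots m_gt0 units_roots (enum_uniq _).
rewrite -cardE cardC1 q_eq /= leqNgt -[X in (X < _)%N]muln1.
by rewrite ltn_mul2l m_gt0.
Qed.

(* With z a nontrivial cube root of unity, the cube roots of w^3 are exactly
   w, z w and z^2 w, since x^3 - w^3 = (x - w)(x - z w)(x - z^2 w). *)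
Lemma cube_fiberE (F : finFieldType) (z w : F) : z ^+ 3 = 1 -> z != 1 ->
  [set x | x ^+ 3 == w ^+ 3] = [set w; z * w; z ^+ 2 * w].
Proof.
move=> z3 z_neq1; have [z_sum _] := prim_cube_root_props z3 z_neq1.
apply/setP => x; rewrite !inE -subr_eq0.
have factor : (x - w) * (x - z * w) * (x - z ^+ 2 * w) = x ^+ 3 - w ^+ 3
    - (z ^+ 2 + z + 1) * (w * x ^+ 2 - z * w ^+ 2 * x + (z - 1) * w ^+ 3) by ring.
by rewrite z_sum mul0r subr0 in factor; rewrite -factor !mulf_eq0 !subr_eq0.
Qed.

(* For w != 0 these three cube roots are distinct, as 1, z, z^2 are. *)
Lemma card_cube_fiber (F : finFieldType) (z w : F) : z ^+ 3 = 1 -> z != 1 ->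
  w != 0 -> #|[set x | x ^+ 3 == w ^+ 3]| = 3.
Proof.
move=> z3 z_neq1 w_neq0; rewrite (cube_fiberE w z3 z_neq1).
have z_neq0 : z != 0.
  by apply: contra_eq_neq z3 => ->; rewrite expr0n eq_sym oner_eq0.
have z2_neq1 : z ^+ 2 != 1.
  by apply: contra_eq_neq z3 => z2; rewrite exprS z2 mulr1.
have z_neq_z2 : z != z ^+ 2.
  apply: contra_neq z_neq1 => zz; apply: (mulfI z_neq0).
  by rewrite mulr1 -expr2 -zz.
have scale_neq (a b : F) : a != b -> (a * w == b * w) = false.
  by move=> ab; apply/negbTE; apply: contra_neq ab; apply: mulIf.
have w_neq_zw : (w == z * w) = false.
  by rewrite -{1}[w]mul1r scale_neq // eq_sym.
have w_neq_z2w : (w == z ^+ 2 * w) = false.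
  by rewrite -{1}[w]mul1r scale_neq // eq_sym.
by rewrite -setUA cardsU1 cards2 !inE w_neq_zw w_neq_z2w scale_neq.
Qed.

Definition cubes (F : finFieldType) : {set F} := [set x ^+ 3 | x in [set: F]].

(* Counting F along the fibers of cubing: the fiber over 0 is {0} and every
   other fiber has 3 elements, so #|F| = 1 + 3 (#|cubes| - 1). *)
Lemma card_cubes (F : finFieldType) (z : F) : z ^+ 3 = 1 -> z != 1 ->
  (3 * #|cubes F| = #|F| + 2)%N.
Proof.
move=> z3 z_neq1.
have zero_cube : (0 : F) \in cubes F.
  by apply/imsetP; exists 0; rewrite ?inE ?expr0n.
have fiber_card y : y \in cubes F :\ 0 -> #|[set x | x ^+ 3 == y]| = 3.
  case/setD1P => y_neq0 /imsetP [w _ y_eq]; rewrite y_eq in y_neq0 *.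
  apply: card_cube_fiber z3 z_neq1 _.
  by apply: contraNneq y_neq0 => ->; rewrite expr0n.
have fibers : #|F| = \sum_(y in cubes F) #|[set x | x ^+ 3 == y]|.
  rewrite -sum1_card (partition_big (fun x => x ^+ 3) (mem (cubes F))) => [|x _].
    apply: eq_bigr => y _; rewrite -sum1_card.
    by apply: eq_bigl => x; rewrite inE.
  by apply: imset_f; rewrite inE.
have zero_fiber : #|[set x : F | x ^+ 3 == 0]| = 1.
  by rewrite -[RHS](cards1 (0 : F)); apply: eq_card => x; rewrite !inE expf_eq0.
rewrite fibers (bigD1 0) //= zero_fiber.
rewrite (eq_bigl (mem (cubes F :\ 0))) => [|y]; last by rewrite !inE andbC.
rewrite (eq_bigr (fun _ => 3%N)) => [|y /fiber_card //].
rewrite sum_nat_const (cardsD1 0 (cubes F)) zero_cube add1n; ring.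
Qed.

Local Close Scope ring_scope.

Theorem mainTheorem14 (F : finFieldType) (v : F) :
  #|F| %% 3 = 1 ->
  (v != 0)%R ->
  (forall w : F, (w ^+ 3 != v)%R) ->
  #|JGH v| = ((#|F| + 2) %/ 3)%N.
Proof.
move=> q_mod3 v_neq0 v_noncube.
have [z z3 z_neq1] := prim_cube_root_exists q_mod3.
have [_ three_neq0] := prim_cube_root_props z3 z_neq1.
have J_eq : JGH v = jOfCube v @: cubes F.
  apply/setP => j; apply/imsetP/imsetP => [[u _ ->] | [_ /imsetP [u _ ->] ->]].
    by exists (u ^+ 3)%R; [apply: imset_f; rewrite inE | rewrite jGH_cubeE].
  by exists u; [rewrite inE -subr_eq0 cube_neq_27v | rewrite jGH_cubeE].
rewrite J_eq card_in_imset => [|_ _ /imsetP [u _ ->] /imsetP [w _ ->]].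
  by rewrite -(card_cubes z3 z_neq1) mulKn.
by rewrite -!jGH_cubeE; apply: jGH_inj_cube.
Qed.
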